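(* Let $\alpha=(\alpha_1,\ldots,\alpha_n)$ be a composition, $\sigma\in S_n$, and $i\in\{1,\ldots,n-1\}$ with $\alpha_i=\alpha_{i+1}$. Let $T\in\mathrm{NAF}(\alpha,\sigma)$ and let $U=\Omega_{0,h}(T)$ for some $h\in\{0,\ldots,\alpha_i\}$, and suppose $U$ is non-attacking. Then for all $r\in\{0,\ldots,h-1\}$, $$\mathrm{wt}_{r}(U)\,\rho_r(U)=\mathrm{wt}_{r}(T)\,\rho_r(T).$$
   Context: Permutations are in one-line notation; $\sigma s_i$ is $\sigma$ with the entries in positions $i,i+1$ exchanged. A composition is a sequence of nonnegative integers. The skyline diagram is $\mathrm{dg}(\alpha)=\{(j,r):1\le j\le n,\ 1\le r\le\alpha_j\}$ ($j$ = column, $r$ = row) and the augmented diagram is $\mathrm{adg}(\alpha)=\mathrm{dg}(\alpha)\cup\{(j,0):1\le j\le n\}$ (row $0$ is the basement). For $u=(j,r)\in\mathrm{dg}(\alpha)$: $\mathrm{south}(u)=(j,r-1)$; $\mathrm{leg}(u)=\alpha_j-r$; the left arm set is $\{(j',r-1)\in\mathrm{adg}(\alpha):j'<j,\ \alpha_{j'}<\alpha_j\}$, the right arm set is $\{(j',r)\in\mathrm{dg}(\alpha):j'>j,\ \alpha_{j'}\le\alpha_j\}$, $\mathrm{Arm}(u)$ is their union and $\mathrm{arm}(u)=|\mathrm{Arm}(u)|$. Two boxes of $\mathrm{adg}(\alpha)$ attack each other if they are in the same row, or in consecutive rows with the box in the higher row strictly to the right of the box in the lower row. A filling of shape $\alpha$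 and basement $\tau\in S_n$ is a map $T:\mathrm{adg}(\alpha)\to\{1,\ldots,n\}$ with $T(j,0)=\tau_j$; $\mathrm{NAF}(\alpha,\tau)$ is the set of non-attacking ones (attacking boxes have distinct entries). For integers $a,b$ let $\chi(a,b)=1$ if $a>b$ and $0$ otherwise, and $\chi(a,b,c)=\chi(a,b)+\chi(b,c)-\chi(a,c)$. For a non-attacking filling $T$: a descent is $u\in\mathrm{dg}(\alpha)$ with $T(u)>T(\mathrm{south}(u))$; a triple is $(u,v,w)$ with $u\in\mathrm{dg}(\alpha)$, $w=\mathrm{south}(u)$, $v\in\mathrm{Arm}(u)$, an inversion triple if $\chi(T(u),T(v),T(w))=1$ and a coinversion triple otherwise. For $r\ge0$, let $\mathrm{maj}_{r+1}(T)=\sum(\mathrm{leg}(u)+1)$ over descents $u$ in row $r+1$, let $\mathrm{coinv}_{r,r+1}(T)$ be the number of coinversion triples $(u,v,w)$ with $u$ in row $r+1$, and $\mathrm{wt}_r(T)=q^{\mathrm{maj}_{r+1}(T)}t^{\mathrm{coinv}_{r,r+1}(T)}\prod_{u\in\mathrm{dg}(\alpha)\text{ in row }r+1,\ T(u)\ne T(\mathrm{south}(u))}\frac{1-t}{1-q^{1+\mathrm{leg}(u)}t^{1+\mathrm{arm}(u)}}$ (empty sums are $0$, empty products $1$). Fix $i$ with $\alpha_i=\alpha_{i+1}$. For a filling $T$ and $0\le r\le\alpha_i$, $\mathrm{swap}_r(T)$ exchanges the entries of boxes $(i,r)$ and $(i+1,r)$, and $\Omega_{0,h}=\mathrm{swap}_h\circ\cdots\circ\mathrm{swap}_0$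 (so $\Omega_{0,h}(T)$ has basement $\sigma s_i$). For a non-attacking filling $T$ (any basement) and $0\le r\le\alpha_i-1$, let $a=T(i,r)$, $b=T(i+1,r)$, $c=T(i,r+1)$, $d=T(i+1,r+1)$, $A=\mathrm{arm}(i+1,r+1)$, $\ell=\mathrm{leg}(i+1,r+1)$, and define $\rho_r(T)\in\mathbb{Q}(q,t)$: if $a,b,c,d$ are distinct, $\rho_r(T)=0$ when $\chi(c,d,a)=\chi(c,d,b)$ and $\rho_r(T)=1$ when $\chi(c,d,a)=\chi(d,c,b)$; if exactly three of them are distinct, then $\rho_r(T)=0$ if $b=c$, $\rho_r(T)=1$ if $b=d$, and $\rho_r(T)=t^{1-\chi(d,a,b)}\frac{1-q^{\ell+1}t^{A+1}}{1-q^{\ell+1}t^{A+2}}$ if $a=c$; if $a=c$ and $b=d$, $\rho_r(T)=1$. *)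

From mathcomp Require Import all_boot all_order all_algebra.
Set Implicit Arguments. Unset Strict Implicit. Unset Printing Implicit Defensive.
Import Order.TTheory GRing.Theory Num.Theory.

(* Conventions: columns are 1-indexed natural numbers j (1 <= j <= n),
   rows are natural numbers r (row 0 = basement).  A composition is a
   [seq nat] alpha with n = size alpha and alpha_j = nth 0 alpha j.-1.
   A permutation sigma of S_n in one-line notation is a [seq nat] that is a
   permutation of [1; ...; n].  A filling is a total function
   T : nat -> nat -> nat, T j r being the entry of box (j, r); only its values
   on adg(alpha) matter. *)

Definition Rqt := {poly {poly rat}}.
Definition Kqt := {fraction Rqt}.
Definition qv : Kqt := FracField.tofrac ((('X : {poly rat})%:P) : Rqt).
Definition tv : Kqt := FracField.tofrac ('X : Rqt).

Section Skyline.
Variable alpha : seq nat.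

Definition nn := size alpha.
Definition al (j : nat) : nat := nth 0 alpha j.-1.

Definition in_dg (j r : nat) : bool := [&& 1 <= j, j <= nn, 1 <= r & r <= al j].
Definition in_adg (j r : nat) : bool := [&& 1 <= j, j <= nn & r <= al j].

Definition leg (j r : nat) : nat := al j - r.

Definition left_arm (j r : nat) : seq (nat * nat) :=
  [seq (j', r.-1) | j' <- iota 1 (j - 1) & in_adg j' r.-1 && (al j' < al j)].
Definition right_arm (j r : nat) : seq (nat * nat) :=
  [seq (j', r) | j' <- iota j.+1 (nn - j) & in_dg j' r && (al j' <= al j)].
Definition Arm (j r : nat) : seq (nat * nat) := left_arm j r ++ right_arm j r.
Definition arm (j r : nat) : nat := size (Arm j r).

Definition attack (j1 r1 j2 r2 : nat) : bool :=
  [|| (r1 == r2) && (j1 != j2),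
      (r2 == r1.+1) && (j1 < j2)
    | (r1 == r2.+1) && (j2 < j1)].

Definition non_attacking (T : nat -> nat -> nat) : Prop :=
  forall j1 r1 j2 r2, in_adg j1 r1 -> in_adg j2 r2 ->
    attack j1 r1 j2 r2 -> T j1 r1 <> T j2 r2.

Definition is_filling (tau : seq nat) (T : nat -> nat -> nat) : Prop :=
  (forall j r, in_adg j r -> 1 <= T j r <= nn) /\
  (forall j, 1 <= j <= nn -> T j 0 = nth 0 tau j.-1).

Definition NAF (tau : seq nat) (T : nat -> nat -> nat) : Prop :=
  is_filling tau T /\ non_attacking T.

Definition chi (a b : nat) : int := (a > b)%N%:Z.
Definition chi3 (a b c : nat) : int := (chi a b + chi b c - chi a c)%R.

Local Open Scope ring_scope.

Definition maj1 (T : nat -> nat -> nat) (r : nat) : nat :=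
  (\sum_(j <- iota 1 nn | in_dg j r.+1 && (T j r.+1 > T j r)%N) (leg j r.+1).+1)%N.

Definition coinv1 (T : nat -> nat -> nat) (r : nat) : nat :=
  (\sum_(j <- iota 1 nn | in_dg j r.+1)
     count (fun v : nat * nat => chi3 (T j r.+1) (T v.1 v.2) (T j r) != 1%R)
           (Arm j r.+1))%N.

Definition wt (T : nat -> nat -> nat) (r : nat) : Kqt :=
  qv ^+ maj1 T r * tv ^+ coinv1 T r *
  \prod_(j <- iota 1 nn | in_dg j r.+1 && (T j r.+1 != T j r))
     ((1 - tv) / (1 - qv ^+ (1 + leg j r.+1)%N * tv ^+ (1 + arm j r.+1)%N)).

Definition swap_row (i r : nat) (T : nat -> nat -> nat) : nat -> nat -> nat :=
  fun j r' => if r' == r then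
                (if j == i then T i.+1 r' else if j == i.+1 then T i r' else T j r')
              else T j r'.

Fixpoint Omega (i h : nat) (T : nat -> nat -> nat) : nat -> nat -> nat :=
  match h with
  | 0 => swap_row i 0 T
  | h'.+1 => swap_row i h'.+1 (Omega i h' T)
  end.

Definition rho (i : nat) (T : nat -> nat -> nat) (r : nat) : Kqt :=
  let a := T i r in let b := T i.+1 r in
  let c := T i r.+1 in let d := T i.+1 r.+1 in
  let A := arm i.+1 r.+1 in let l := leg i.+1 r.+1 in
  if size (undup [:: a; b; c; d]) == 4%N then
    (if chi3 c d a == chi3 c d b then 0
     else if chi3 c d a == chi3 d c b then 1 else 0)
  else if size (undup [:: a; b; c; d]) == 3%N then
    (if b == c then 0
     else if b == d then 1
     else if a == c then
       tv ^ (1 - chi3 d a b) *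
       ((1 - qv ^+ l.+1 * tv ^+ A.+1) / (1 - qv ^+ l.+1 * tv ^+ A.+2))
     else 0)
  else if (a == c) && (b == d) then 1
  else 0.

End Skyline.

Definition perm_si (sigma : seq nat) (i : nat) : seq nat :=
  [seq (if k == i then nth 0 sigma i else if k == i.+1 then nth 0 sigma i.-1
        else nth 0 sigma k.-1) | k <- iota 1 (size sigma)].

(* Swapping columns i and i+1 in rows 0, ..., r+1 changes wt_r only locally.
   Since alpha_i = alpha_(i+1), both columns have the same legs, the arm of
   (i, r+1) is that of (i+1, r+1) plus the box (i+1, r+1) itself, and the arm
   of every other box is permuted by the swap.  Hence maj_(r+1) is unchanged,
   the coinversion count changes only through the triple
   ((i, r+1), (i+1, r+1), (i, r)), and the product changes only in which of
   the two columns carries which denominator.  What is left is an identity in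
   the four entries a, b, c, d of the 2x2 block, checked in the four cases
   a = c or not, b = d or not; non-attacking of T and U rules out all other
   coincidences among a, b, c, d. *)

From mathcomp Require Import all_boot all_order all_algebra ring zify.
Import Order.TTheory GRing.Theory Num.Theory.

Set Implicit Arguments.
Unset Strict Implicit.
Unset Printing Implicit Defensive.

Definition swap_col (i j : nat) : nat :=
  if j == i then i.+1 else if j == i.+1 then i else j.

Lemma swap_colK i : involutive (swap_col i).
Proof. by move=> j; rewrite /swap_col; repeat case: ifP; lia. Qed.

Lemma swap_colL i : swap_col i i = i.+1.
Proof. by rewrite /swap_col eqxx. Qed.

Lemma swap_colR i : swap_col i i.+1 = i.
Proof. by rewrite /swap_col eqxx (gtn_eqF (ltnSn i)). Qed.

Lemma swap_colD i j : j \notin [:: i; i.+1] -> swap_col i j = j.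
Proof. by rewrite /swap_col !inE => /norP[/negbTE-> /negbTE->]. Qed.

Lemma perm_map_swap_col_iota i m n :
  (i \in iota m n) = (i.+1 \in iota m n) ->
  perm_eq (map (swap_col i) (iota m n)) (iota m n).
Proof.
have swap_inj := inv_inj (swap_colK i).
move=> mem_pair; apply: uniq_perm; rewrite ?(map_inj_uniq swap_inj) ?iota_uniq //.
move=> j; rewrite -{1}(swap_colK i j) (mem_map swap_inj).
by move: mem_pair; rewrite !mem_iota /swap_col; repeat case: ifP; lia.
Qed.

Lemma perm_swap_col_row i (P : pred nat) (y m n : nat) :
    (forall j, P (swap_col i j) = P j) -> (i \in iota m n) = (i.+1 \in iota m n) ->
  perm_eq [seq (swap_col i v.1, v.2) | v <- [seq (j, y) | j <- iota m n & P j]]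
          [seq (j, y) | j <- iota m n & P j].
Proof.
move=> P_swap mem_pair; rewrite -map_comp (map_comp (pair^~ y) (swap_col i)).
apply: perm_map; rewrite -[in X in perm_eq X _](@eq_filter _ (preim (swap_col i) P) P P_swap).
by rewrite -filter_map perm_filter // perm_map_swap_col_iota.
Qed.

Lemma big_iota_pair (R : Type) (idx : R) (op : Monoid.com_law idx) n i (F : nat -> R) :
  0 < i < n ->
  \big[op/idx]_(j <- iota 1 n) F j =
  op (\big[op/idx]_(j <- iota 1 n | j \notin [:: i; i.+1]) F j) (op (F i) (F i.+1)).
Proof.
move=> /andP[i_gt0 i_lt_n].
have perm_iota : perm_eq (iota 1 n) (i :: i.+1 :: [seq j <- iota 1 n | j \notin [:: i; i.+1]]).
  apply: uniq_perm; rewrite ?iota_uniq //=.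
    by rewrite filter_uniq ?iota_uniq // !inE !mem_filter !inE !mem_iota; lia.
  by move=> j; rewrite !inE mem_filter mem_iota !inE; lia.
by rewrite (perm_big _ perm_iota) !big_cons big_filter Monoid.mulmA Monoid.mulmC.
Qed.

Lemma mem_left_arm alpha j x (v : nat * nat) :
  v \in left_arm alpha j x -> v.1 < j /\ v.2 = x.-1.
Proof. by case/mapP=> j'; rewrite mem_filter mem_iota => /andP[_ lt_j'] -> /=; lia. Qed.

Lemma mem_right_arm alpha j x (v : nat * nat) :
  v \in right_arm alpha j x -> j < v.1 /\ v.2 = x.
Proof. by case/mapP=> j'; rewrite mem_filter mem_iota => /andP[_ lt_j'] -> /=; lia. Qed.

Lemma mem_Arm_row alpha j x (v : nat * nat) : v \in Arm alpha j x -> v.2 <= x.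
Proof. by rewrite mem_cat => /orP[/mem_left_arm|/mem_right_arm]; lia. Qed.

Lemma swap_rowE i r T j x :
  swap_row i r T j x = if x == r then T (swap_col i j) x else T j x.
Proof. by rewrite /swap_row /swap_col; case: (x == r) => //; repeat case: ifP. Qed.

Lemma OmegaE i h T j x :
  Omega i h T j x = if x <= h then T (swap_col i j) x else T j x.
Proof.
elim: h j x => [|h IH] j x /=; rewrite swap_rowE; first by case: x.
rewrite !IH swap_colK; case: eqP => [->|/eqP neq_xh]; first by rewrite ltnn leqnn.
by rewrite [x <= h.+1]leq_eqVlt ltnS (negbTE neq_xh).
Qed.

Local Open Scope ring_scope.

Lemma chi3_01 x y z : chi3 x y z = 0 \/ chi3 x y z = 1.
Proof.
rewrite /chi3 /chi.
by case: (ltngtP x y); case: (ltngtP y z); case: (ltngtP x z) => //= *; try lia; auto.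
Qed.

Lemma chi3_swap12 x y z : x != y -> chi3 y x z = 1 - chi3 x y z.
Proof.
rewrite /chi3 /chi => /eqP neq_xy.
by case: (ltngtP x y); case: (ltngtP y z); case: (ltngtP x z) => //= *; lia.
Qed.

Lemma chi3_xyx x y : x != y -> chi3 x y x = 1.
Proof. by rewrite /chi3 /chi ltnn => /eqP; case: (ltngtP x y) => //= *; lia. Qed.

Lemma expr_1_sub_chi3 (F : unitRingType) (t : F) x y z :
  t ^ (1 - chi3 x y z) = t ^+ (chi3 x y z != 1).
Proof. by case: (chi3_01 x y z) => ->. Qed.

Lemma one_sub_qt_neq0 k m : 1 - qv ^+ k * tv ^+ m.+1 != 0.
Proof.
rewrite /qv /tv -!tofracXn -tofracM -tofrac1 -tofracB tofrac_eq0.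
apply/eqP => /(congr1 (fun p : Rqt => p.[0])).
by rewrite !hornerE /= expr0n /= mulr0 subr0 => /eqP; rewrite oner_eq0.
Qed.

Section RhoValue.
Variables (alpha : seq nat) (i : nat) (X : nat -> nat -> nat) (r : nat).
Local Notation a := (X i r).
Local Notation b := (X i.+1 r).
Local Notation c := (X i r.+1).
Local Notation d := (X i.+1 r.+1).
Hypotheses (neq_ab : a != b) (neq_cd : c != d) (neq_ad : a != d) (neq_bc : b != c).

Lemma rhoE : rho alpha i X r =
  if a == c then
    if b == d then 1 else
    tv ^+ (chi3 d a b != 1) *
    ((1 - qv ^+ (leg alpha i.+1 r.+1).+1 * tv ^+ (arm alpha i.+1 r.+1).+1) /
     (1 - qv ^+ (leg alpha i.+1 r.+1).+1 * tv ^+ (arm alpha i.+1 r.+1).+2))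
  else if b == d then 1 else (chi3 c d a != chi3 c d b)%:R.
Proof.
have neqE (x y : nat) : x != y -> ((x == y) = false) * ((y == x) = false).
  by move=> /negbTE neq_xy; rewrite [y == x]eq_sym neq_xy.
have neq4E := (neqE _ _ neq_ab, neqE _ _ neq_cd, neqE _ _ neq_ad, neqE _ _ neq_bc).
rewrite /rho /= expr_1_sub_chi3.
have [<-|neq_ac] := eqVneq a c; have [<-|neq_bd] := eqVneq b d;
  rewrite /= !inE ?eqxx !neq4E ?(neqE _ _ neq_ac) ?(neqE _ _ neq_bd) //=.
rewrite (chi3_swap12 b neq_cd).
by case: (chi3_01 c d a) => ->; case: (chi3_01 c d b) => ->.
Qed.
End RhoValue.

Definition col_factor (alpha : seq nat) (Z : nat -> nat -> nat) (r j : nat) : Kqt :=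
  if Z j r.+1 != Z j r then
    (1 - tv) / (1 - qv ^+ (1 + leg alpha j r.+1) * tv ^+ (1 + arm alpha j r.+1))
  else 1.

Lemma wtE alpha Z r : wt alpha Z r =
  qv ^+ maj1 alpha Z r * tv ^+ coinv1 alpha Z r *
  \prod_(j <- iota 1 (nn alpha) | in_dg alpha j r.+1) col_factor alpha Z r j.
Proof. by rewrite /wt big_mkcondr. Qed.

(* The factors of wt_r(Z) not shared between Z and its column swap. *)
Definition pair_wt (alpha : seq nat) (i : nat) (Z : nat -> nat -> nat) (r : nat) : Kqt :=
  tv ^+ (chi3 (Z i r.+1) (Z i.+1 r.+1) (Z i r) != 1) *
  (col_factor alpha Z r i * col_factor alpha Z r i.+1).

Local Close Scope ring_scope.

Section EqualColumns.
Variables (alpha : seq nat) (i : nat).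
Hypotheses (i_gt0 : 0 < i) (i_lt_n : i < nn alpha) (eq_al : al alpha i = al alpha i.+1).

Lemma al_swap_col j : al alpha (swap_col i j) = al alpha j.
Proof. by rewrite /swap_col; case: eqP => [->|_]; last case: eqP => [->|_]. Qed.

Lemma in_dg_swap_col j x : in_dg alpha (swap_col i j) x = in_dg alpha j x.
Proof. by rewrite /in_dg al_swap_col /swap_col; repeat case: ifP; lia. Qed.

Lemma in_adg_swap_col j x : in_adg alpha (swap_col i j) x = in_adg alpha j x.
Proof. by rewrite /in_adg al_swap_col /swap_col; repeat case: ifP; lia. Qed.

Lemma left_arm_pair x : left_arm alpha i.+1 x = left_arm alpha i x.
Proof.
rewrite /left_arm (_ : i.+1 - 1 = i - 1 + 1) ?iotaD ?filter_cat /=; last by lia.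
by rewrite subnKC // -eq_al ltnn andbF cats0.
Qed.

Lemma right_arm_pair x : in_dg alpha i.+1 x ->
  right_arm alpha i x = (i.+1, x) :: right_arm alpha i.+1 x.
Proof.
move=> dg_x; rewrite /right_arm -[nn alpha - i](subnSK i_lt_n) /=.
by rewrite dg_x eq_al leqnn.
Qed.

Lemma arm_pair x : in_dg alpha i.+1 x -> arm alpha i x = (arm alpha i.+1 x).+1.
Proof.
by move=> dg_x; rewrite /arm /Arm right_arm_pair // left_arm_pair !size_cat addnS.
Qed.

Lemma perm_Arm_swap_col j x : j \notin [:: i; i.+1] ->
  perm_eq [seq (swap_col i v.1, v.2) | v <- Arm alpha j x] (Arm alpha j x).
Proof.
rewrite !inE => /norP[/eqP neq_ji /eqP neq_ji1].
rewrite /Arm map_cat; apply: perm_cat; apply: perm_swap_col_row => [j'|];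
  rewrite ?in_adg_swap_col ?in_dg_swap_col ?al_swap_col ?mem_iota //; lia.
Qed.

Section SwappedFillings.
Variables (X Y : nat -> nat -> nat) (r : nat).
Hypotheses (r_lt : r < al alpha i)
  (Y_swap : forall j x, x <= r.+1 -> Y j x = X (swap_col i j) x).

Let pair_range : 0 < i < nn alpha.
Proof. exact/andP. Qed.

Let in_dg_i : in_dg alpha i r.+1.
Proof. by rewrite /in_dg; lia. Qed.

Let in_dg_i1 : in_dg alpha i.+1 r.+1.
Proof. by rewrite /in_dg -eq_al; lia. Qed.

Lemma Y_off_pair j x : x <= r.+1 -> j \notin [:: i; i.+1] -> Y j x = X j x.
Proof. by move=> x_le off_j; rewrite Y_swap // swap_colD. Qed.

Lemma maj1_swap : maj1 alpha Y r = maj1 alpha X r.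
Proof.
rewrite /maj1 [LHS]big_mkcond [RHS]big_mkcond.
rewrite [LHS](big_iota_pair _ _ pair_range) [RHS](big_iota_pair _ _ pair_range).
congr (_ + _); first by apply: eq_bigr => j off_j; rewrite !Y_off_pair.
by rewrite in_dg_i in_dg_i1 !Y_swap // swap_colL swap_colR /leg eq_al Monoid.mulmC.
Qed.

Lemma count_Arm_swap j x (p : pred nat) : j \notin [:: i; i.+1] -> x <= r.+1 ->
  count (fun v => p (Y v.1 v.2)) (Arm alpha j x) =
  count (fun v => p (X v.1 v.2)) (Arm alpha j x).
Proof.
move=> off_j x_le; rewrite -[RHS](permP (perm_Arm_swap_col x off_j)) count_map.
by apply: eq_in_count => v /mem_Arm_row v_row; rewrite /= Y_swap // (leq_trans v_row).
Qed.

Lemma count_off_pair s (p : pred nat) :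
  {in s, forall v : nat * nat, v.1 \notin [:: i; i.+1] /\ v.2 <= r.+1} ->
  count (fun v => p (Y v.1 v.2)) s = count (fun v => p (X v.1 v.2)) s.
Proof.
by move=> off_s; apply: eq_in_count => v /off_s[off_v v_row]; rewrite /= Y_off_pair.
Qed.

Lemma coinv1_swap : exists C,
  coinv1 alpha Y r = C + (chi3 (Y i r.+1) (Y i.+1 r.+1) (Y i r) != 1%R) /\
  coinv1 alpha X r = C + (chi3 (X i r.+1) (X i.+1 r.+1) (X i r) != 1%R).
Proof.
pose cnt Z j :=
  count (fun v => chi3 (Z j r.+1) (Z v.1 v.2) (Z j r) != 1%R) (Arm alpha j r.+1).
pose rest Z := \sum_(j <- iota 1 (nn alpha) | j \notin [:: i; i.+1])
                 (if in_dg alpha j r.+1 then cnt Z j else 0).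
have coinvE Z : coinv1 alpha Z r = rest Z + (cnt Z i + cnt Z i.+1).
  by rewrite /coinv1 big_mkcond (big_iota_pair _ _ pair_range) /= in_dg_i in_dg_i1.
have rest_swap : rest Y = rest X.
  apply: eq_bigr => j off_j; case: ifP => // _.
  by rewrite /cnt !Y_off_pair // (count_Arm_swap (fun y => chi3 _ y _ != 1%R)).
have off_L : {in left_arm alpha i r.+1,
                forall v : nat * nat, v.1 \notin [:: i; i.+1] /\ v.2 <= r.+1}.
  by move=> v /mem_left_arm; rewrite !inE; lia.
have off_R : {in right_arm alpha i.+1 r.+1,
                forall v : nat * nat, v.1 \notin [:: i; i.+1] /\ v.2 <= r.+1}.
  by move=> v /mem_right_arm; rewrite !inE; lia.
rewrite (coinvE Y) (coinvE X) rest_swap /cnt /Arm left_arm_pair right_arm_pair //.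
rewrite !count_cat /= !(count_off_pair (fun y => chi3 _ y _ != 1%R) off_L).
rewrite !(count_off_pair (fun y => chi3 _ y _ != 1%R) off_R) !Y_swap // swap_colL swap_colR.
set L1 := count _ (left_arm _ _ _); set L2 := count _ (left_arm _ _ _).
set R1 := count _ (right_arm _ _ _); set R2 := count _ (right_arm _ _ _).
by exists (rest X + (L1 + L2 + R1 + R2)); split; lia.
Qed.

Lemma prod_col_factor_swap : exists P : Kqt,
  (\prod_(j <- iota 1 (nn alpha) | in_dg alpha j r.+1) col_factor alpha Y r j =
    P * (col_factor alpha Y r i * col_factor alpha Y r i.+1))%R /\
  (\prod_(j <- iota 1 (nn alpha) | in_dg alpha j r.+1) col_factor alpha X r j =
    P * (col_factor alpha X r i * col_factor alpha X r i.+1))%R.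
Proof.
pose rest Z := (\prod_(j <- iota 1 (nn alpha) | j \notin [:: i; i.+1])
                 if in_dg alpha j r.+1 then col_factor alpha Z r j else 1)%R.
have prodE Z : (\prod_(j <- iota 1 (nn alpha) | in_dg alpha j r.+1) col_factor alpha Z r j =
               rest Z * (col_factor alpha Z r i * col_factor alpha Z r i.+1))%R.
  by rewrite big_mkcond (big_iota_pair _ _ pair_range) /= in_dg_i in_dg_i1.
exists (rest X); rewrite !prodE; split => //; congr (_ * _)%R.
by apply: eq_bigr => j off_j; rewrite /col_factor !Y_off_pair.
Qed.

Lemma wt_swap : exists K : Kqt,
  wt alpha Y r = (K * pair_wt alpha i Y r)%R /\ wt alpha X r = (K * pair_wt alpha i X r)%R.
Proof.
have [C [coinvY coinvX]] := coinv1_swap.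
have [P [prodY prodX]] := prod_col_factor_swap.
exists (qv ^+ maj1 alpha X r * tv ^+ C * P)%R.
by rewrite /pair_wt !wtE maj1_swap coinvY coinvX prodY prodX !exprD; split; ring.
Qed.

Lemma pair_wt_rho_swap :
  X i r != X i.+1 r -> X i r.+1 != X i.+1 r.+1 ->
  X i r != X i.+1 r.+1 -> X i.+1 r != X i r.+1 ->
  (pair_wt alpha i Y r * rho alpha i Y r = pair_wt alpha i X r * rho alpha i X r)%R.
Proof.
move=> neq_ab neq_cd neq_ad neq_bc.
have [Ya Yb Yc Yd] : [/\ Y i r = X i.+1 r, Y i.+1 r = X i r,
                        Y i r.+1 = X i.+1 r.+1 & Y i.+1 r.+1 = X i r.+1].
  by rewrite !Y_swap // swap_colL swap_colR.
have [neqY_ab neqY_cd neqY_ad neqY_bc] :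
    [/\ Y i r != Y i.+1 r, Y i r.+1 != Y i.+1 r.+1,
        Y i r != Y i.+1 r.+1 & Y i.+1 r != Y i r.+1].
  by rewrite Ya Yb Yc Yd; split; rewrite // eq_sym.
rewrite (rhoE alpha neq_ab neq_cd neq_ad neq_bc).
rewrite (rhoE alpha neqY_ab neqY_cd neqY_ad neqY_bc) /pair_wt /col_factor Ya Yb Yc Yd.
rewrite arm_pair // /leg eq_al !add1n.
set l := (al alpha i.+1 - r.+1).+1; set A := arm alpha i.+1 r.+1.
set D1 := (1 - qv ^+ l * tv ^+ A.+1)%R; set D2 := (1 - qv ^+ l * tv ^+ A.+2)%R.
(* The arm of (i, r+1) exceeds that of (i+1, r+1) by one; the rational factor
   of rho turns one denominator into the other. *)
have F_ratio : ((1 - tv) / D1 * (D1 / D2) = (1 - tv) / D2)%R.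
  by rewrite mulrA divfK // one_sub_qt_neq0.
rewrite [X i r.+1 == X i r]eq_sym [X i.+1 r.+1 == X i.+1 r]eq_sym.
have [<-|neq_ac] := eqVneq (X i r) (X i r.+1);
  have [<-|neq_bd] := eqVneq (X i.+1 r) (X i.+1 r.+1).
- by rewrite !chi3_xyx // eq_sym.
- by rewrite chi3_xyx //= -F_ratio; ring.
- by rewrite chi3_xyx //= -F_ratio; ring.
- rewrite /= !(chi3_swap12 _ neq_cd).
  case: (chi3_01 (X i r.+1) (X i.+1 r.+1) (X i r)) => ->;
     case: (chi3_01 (X i r.+1) (X i.+1 r.+1) (X i.+1 r)) => ->;
  by rewrite ?subr0 ?subrr ?mulr0.
Qed.

Lemma wt_rho_swap :
  X i r != X i.+1 r -> X i r.+1 != X i.+1 r.+1 ->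
  X i r != X i.+1 r.+1 -> X i.+1 r != X i r.+1 ->
  (wt alpha Y r * rho alpha i Y r = wt alpha X r * rho alpha i X r)%R.
Proof.
move=> neq_ab neq_cd neq_ad neq_bc; have [K [-> ->]] := wt_swap.
by rewrite -[LHS]mulrA -[RHS]mulrA pair_wt_rho_swap.
Qed.

End SwappedFillings.
End EqualColumns.

Lemma non_attacking_row alpha Z j x : non_attacking alpha Z ->
  in_adg alpha j x -> in_adg alpha j.+1 x -> Z j x != Z j.+1 x.
Proof. by move=> Z_na adg adg1; apply/eqP; apply: Z_na; rewrite // /attack; lia. Qed.

Lemma non_attacking_diag alpha Z j x : non_attacking alpha Z ->
  in_adg alpha j x -> in_adg alpha j.+1 x.+1 -> Z j x != Z j.+1 x.+1.
Proof. by move=> Z_na adg adg1; apply/eqP; apply: Z_na; rewrite // /attack; lia. Qed.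

Local Open Scope ring_scope.

Theorem lemma3p10 (alpha sigma : seq nat) (i : nat)
  (T : nat -> nat -> nat) (h : nat) :
  perm_eq sigma (iota 1 (size alpha)) ->
  (1 <= i)%N -> (i <= size alpha - 1)%N ->
  al alpha i = al alpha i.+1 ->
  NAF alpha sigma T ->
  (h <= al alpha i)%N ->
  non_attacking alpha (Omega i h T) ->
  forall r : nat, (r < h)%N ->
    wt alpha (Omega i h T) r * rho alpha i (Omega i h T) r =
    wt alpha T r * rho alpha i T r.
Proof.
move=> _ i_gt0 i_le eq_al [_ T_na] h_le U_na r r_lt_h.
have i_lt_n : (i < nn alpha)%N by rewrite /nn; lia.
have U_swap j x : (x <= r.+1)%N -> Omega i h T j x = T (swap_col i j) x.
  by move=> x_le; rewrite OmegaE (leq_trans x_le r_lt_h).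
have adg x : (x <= r.+1)%N -> in_adg alpha i x /\ in_adg alpha i.+1 x.
  by rewrite /in_adg -eq_al; lia.
have [[adg_r adg1_r] [adg_r1 adg1_r1]] := (adg r (leqnSn r), adg r.+1 (leqnn _)).
apply: (wt_rho_swap i_gt0 i_lt_n eq_al (leq_trans r_lt_h h_le) U_swap).
- exact: non_attacking_row T_na adg_r adg1_r.
- exact: non_attacking_row T_na adg_r1 adg1_r1.
- exact: non_attacking_diag T_na adg_r adg1_r1.
- have := non_attacking_diag U_na adg_r adg1_r1.
  by rewrite !U_swap // swap_colL swap_colR.
Qed.
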